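(* Let $\Xi\subseteq L^0(\mathbb{R}^d,\mathcal{F})$ be infinitely $\mathcal{F}$-decomposable, and let $\Gamma$ be an $\mathcal{F}$-measurable random set such that $\Gamma(\omega)$ is open and non-empty for almost all $\omega$. Then $$L^0(\Gamma,\mathcal{F})+\Xi=L^0(\Gamma,\mathcal{F})+\mathrm{cl}_0\,\Xi,$$ where the sums are elementwise (Minkowski) sums of families of random vectors.
   Context: $(\Omega,\mathcal{F},\mathbb{P})$ is a complete probability space. A map $\Gamma$ from $\Omega$ to subsets of $\mathbb{R}^d$ is an $\mathcal{F}$-measurable random set if its graph $\{(\omega,x):x\in\Gamma(\omega)\}$ belongs to $\mathcal{F}\otimes\mathcal{B}(\mathbb{R}^d)$. $L^0(\Gamma,\mathcal{F})$ is the family of $\mathcal{F}$-measurable random vectors $\xi$ with $\xi\in\Gamma$ a.s. (selections); $L^0(\mathbb{R}^d,\mathcal{F})$ is the family of all $\mathcal{F}$-measurable random vectors, identified up to a.s. equality. $\mathrm{cl}_0$ denotes closure with respect to convergence in probability. A family $\Xi\subseteq L^0(\mathbb{R}^d,\mathcal{F})$ is infinitely $\mathcal{F}$-decomposable if $\sum_n \xi_n\mathbf{1}_{A_n}\in\Xi$ for every sequence $(\xi_n)_{n\ge1}$ in $\Xi$ and every countable $\mathcal{F}$-measurable partition $(A_n)_{n\ge1}$ of $\Omega$. *)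

From HB Require Import structures.
From mathcomp Require Import all_boot all_order all_algebra.
From mathcomp Require Import all_classical all_reals all_analysis.
Set Implicit Arguments. Unset Strict Implicit. Unset Printing Implicit Defensive.
Import Order.TTheory GRing.Theory Num.Theory.
Import numFieldNormedType.Exports.
Local Open Scope classical_set_scope.
Local Open Scope ring_scope.

Section L0.
Context {dO : measure_display} {Omega : measurableType dO} {R : realType}.
Context (P : probability Omega R) (d : nat).

(* random vectors in R^d are maps Omega -> 'rV[R]_d;  F-measurability is
   measurability of each coordinate (Borel sigma-algebra of R^d is the
   product of the Borel sigma-algebras of R). *)
Definition rvec_meas (xi : Omega -> 'rV[R]_d) : Prop :=
  forall i : 'I_d, measurable_fun setT (fun w => xi w ord0 i).

Definition ae_eq (xi eta : Omega -> 'rV[R]_d) : Prop :=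
  {ae P, forall w, xi w = eta w}.

Definition ae_in (Xi : set (Omega -> 'rV[R]_d)) (eta : Omega -> 'rV[R]_d) : Prop :=
  exists2 xi, Xi xi & ae_eq xi eta.

Definition L0_family (Xi : set (Omega -> 'rV[R]_d)) : Prop :=
  forall xi, Xi xi -> rvec_meas xi.

Definition meas_rectangles : set (set (Omega * 'rV[R]_d)) :=
  [set C | exists A : set Omega, exists B : 'I_d -> set R,
     [/\ measurable A, (forall i, measurable (B i)) &
         C = A `*` [set x : 'rV[R]_d | forall i, B i (x ord0 i)]]].

(* F-measurable random set: its graph lies in F (x) B(R^d) *)
Definition random_set_meas (Gamma : Omega -> set 'rV[R]_d) : Prop :=
  <<s meas_rectangles >> [set p : Omega * 'rV[R]_d | Gamma p.1 p.2].

Definition L0_sel (Gamma : Omega -> set 'rV[R]_d) : set (Omega -> 'rV[R]_d) :=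
  [set xi | rvec_meas xi /\ {ae P, forall w, Gamma w (xi w)}].

Definition meas_partition (A : nat -> set Omega) : Prop :=
  [/\ forall n, measurable (A n),
      forall n m, n <> m -> A n `&` A m = set0 &
      \bigcup_n A n = setT].

(* infinite F-decomposability (up to a.s. equality): sum_n xi_n 1_{A_n} is in Xi *)
Definition inf_decomposable (Xi : set (Omega -> 'rV[R]_d)) : Prop :=
  forall (xi : nat -> Omega -> 'rV[R]_d) (A : nat -> set Omega),
    (forall n, Xi (xi n)) -> meas_partition A ->
    ae_in Xi (fun w => xi (xget 0%N [set n | A n w]) w).

Definition cvg_in_prob (u : nat -> Omega -> 'rV[R]_d) (xi : Omega -> 'rV[R]_d) : Prop :=
  forall e : R, 0 < e ->
    (fun n => P [set w | e < `|u n w - xi w|]) @ \oo --> 0%E.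

Definition cl0 (Xi : set (Omega -> 'rV[R]_d)) : set (Omega -> 'rV[R]_d) :=
  [set xi | rvec_meas xi /\
     exists u : nat -> Omega -> 'rV[R]_d, (forall n, Xi (u n)) /\ cvg_in_prob u xi].

Definition fam_sum (X Y : set (Omega -> 'rV[R]_d)) : set (Omega -> 'rV[R]_d) :=
  [set eta | exists2 x, X x & exists2 y, Y y & eta = (fun w => x w + y w)].

End L0.

From mathcomp Require Import all_boot all_order all_algebra.
From mathcomp Require Import all_classical all_reals all_analysis.
From mathcomp Require Import measurable_realfun.
Import Order.TTheory GRing.Theory Num.Theory.
Import numFieldNormedType.Exports.
Set Implicit Arguments. Unset Strict Implicit.
Local Open Scope classical_set_scope.
Local Open Scope ring_scope.

(* Let x be a selection of Gamma, y = lim u_n in probability with u_n in Xi.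
   Since Gamma is open, almost every w has a ball around x w inside Gamma w,
   and since inf_n |u_n w - y w| = 0 a.s., for almost every w some index n
   satisfies x w + y w - u_n w in Gamma w. Pasting the u_n along the partition
   "n is the first such index" gives y' in Xi with x + y - y' a selection of
   Gamma, i.e. x + y = (x + y - y') + y' in L^0(Gamma) + Xi. *)

Section measurability.
Context {dO : measure_display} {Omega : measurableType dO} {R : realType}.
Context {d : nat}.
Implicit Types (f g z : Omega -> 'rV[R]_d).

Lemma rvec_measD f g : rvec_meas f -> rvec_meas g -> rvec_meas (f \+ g).
Proof.
move=> mf mg i; rewrite (_ : (fun w => _) = (fun w => f w ord0 i + g w ord0 i)).
  exact: measurable_funD.
by apply/funext => w; rewrite !mxE.
Qed.

Lemma rvec_measB f g : rvec_meas f -> rvec_meas g -> rvec_meas (f \- g).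
Proof.
move=> mf mg i; rewrite (_ : (fun w => _) = (fun w => f w ord0 i - g w ord0 i)).
  exact: measurable_funB.
by apply/funext => w; rewrite !mxE.
Qed.

Lemma measurable_normr_rvec z : rvec_meas z -> measurable_fun setT (fun w => `|z w|).
Proof.
move=> mz.
have -> : (fun w => `|z w|) = (fun w => \big[Num.max/0]_(ij <- index_enum ('I_1 * 'I_d)%type)
                                          `|z w ij.1 ij.2|).
  by apply/funext => w; rewrite [LHS]/Num.Def.normr /= mx_normrE.
elim: (index_enum _) => [|ij s IH].
  by under eq_fun do rewrite big_nil; exact: measurable_cst.
under eq_fun do rewrite big_cons.
apply: measurable_maxr => //; apply: measurableT_comp; first exact: normr_measurable.
by rewrite (ord1 ij.1); exact: mz.
Qed.

Lemma measurable_gtr_fun (f : Omega -> R) (e : R) :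
  measurable_fun setT f -> measurable [set w | e < f w].
Proof.
move=> mf; have := mf measurableT _ (measurable_itv `]e, +oo[).
by rewrite setTI; congr measurable; apply/seteqP; split => w /=; rewrite in_itv /= andbT.
Qed.

Lemma measurable_graph_section z C : rvec_meas z ->
  <<s @meas_rectangles dO Omega R d >> C -> measurable [set w | C (w, z w)].
Proof.
move=> mz; apply: (smallest_sub (X := [set C | measurable [set w | C (w, z w)]])).
  split.
  - exact: measurable0.
  - move=> A /= mA; rewrite (_ : [set w | _] = ~` [set w | A (w, z w)]).
      exact: measurableC.
    by apply/seteqP; split => w /=; [case|].
  - by move=> F mF; exact: bigcupT_measurable.
move=> _ [A [B [mA mB ->]]] /=.
rewrite (_ : [set w | _] = A `&` \bigcap_(i in [set: 'I_d]) (fun w => z w ord0 i) @^-1` B i).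
  apply: measurableI => //; apply: fin_bigcap_measurable => [|i _]; first exact: finite_finset.
  by rewrite -[X in measurable X]setTI; exact: mz.
by apply/seteqP; split => w /= [Aw Bw]; split => // i; [move=> _|]; apply: Bw.
Qed.

End measurability.

Section convergence_in_probability.
Context {dO : measure_display} {Omega : measurableType dO} {R : realType}.
Context (P : probability Omega R) {d : nat}.
Variables (u : nat -> Omega -> 'rV[R]_d) (y : Omega -> 'rV[R]_d).
Hypotheses (mu : forall n, rvec_meas (u n)) (my : rvec_meas y).
Hypothesis uy : cvg_in_prob P u y.

Let far e n := [set w | e < `|u n w - y w|].

Let measurable_far e n : measurable (far e n).
Proof. exact/measurable_gtr_fun/measurable_normr_rvec/rvec_measB. Qed.

Lemma cvg_in_prob_always_far_null e : 0 < e -> P (\bigcap_n far e n) = 0%E.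
Proof.
move=> e0; apply/le_anti/andP; split; last exact: measure_ge0.
rewrite -(cvg_lim _ (uy e0)) //; apply: lime_ge; first exact: cvgP (uy e0).
near=> n; apply: le_measure; rewrite ?inE.
- by apply: bigcapT_measurable => m; exact: measurable_far.
- exact: measurable_far.
- by move=> w farw; exact: farw n I.
Unshelve. all: by end_near.
Qed.

Lemma cvg_in_prob_ae_inf_dist :
  {ae P, forall w e, 0 < e -> exists n, `|u n w - y w| < e}.
Proof.
pose C k := \bigcap_n far k.+1%:R^-1 n.
have nullC : P.-negligible (\bigcup_k C k).
  apply: negligible_bigcup => k; apply/negligibleP.
    by apply: bigcapT_measurable => n; exact: measurable_far.
  by apply: cvg_in_prob_always_far_null; rewrite invr_gt0.
apply: negligibleS nullC => w /= near_w; apply: contrapT => notC; apply: near_w => e e0.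
have [N _ /(_ N (leqnn N)) /= Ne] := near_infty_natSinv_lt (PosNum e0).
have [n /negP] : exists n, ~ far N.+1%:R^-1 n w.
  apply: contrapT => /forallNP allfar; apply: notC; exists N => // n _.
  exact: contrapT.
by rewrite -leNgt => le_n; exists n; exact: le_lt_trans Ne.
Qed.

End convergence_in_probability.

Section partitions.
Context {dO : measure_display} {Omega : measurableType dO}.

Lemma meas_partition_xget (A : nat -> set Omega) w :
  meas_partition A -> A (xget 0%N [set n | A n w]) w.
Proof.
case=> _ _ coverA; have : (\bigcup_n A n) w by rewrite coverA.
by case=> n _ Anw; exact: (@xgetPex _ 0%N [set n | A n w] (ex_intro _ n Anw)).
Qed.

Lemma meas_partition_first_hit (S : nat -> set Omega) :
  (forall n, measurable (S n)) ->
  exists A, meas_partition A /\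
    forall n w, A n w -> (exists m, S m w) -> S n w.
Proof.
move=> mS; pose S' n := if n is 0 then S 0%N `|` ~` \bigcup_m S m else S n.
have mS' n : measurable (S' n).
  by case: n => [|n] //=; apply: measurableU => //; exact/measurableC/bigcupT_measurable.
exists (seqDU S'); split; first split.
- exact: seqDU_measurable.
- move=> n m nm; apply/seteqP; split => // w Aw; apply: nm.
  by apply: (trivIset_seqDU S') => //; exists w.
- rewrite -seqDU_bigcup_eq; apply/seteqP; split => // w _.
  have [[m _ Smw]|noS] := pselect ((\bigcup_m S m) w); first by exists m => //; case: m Smw => [|m] Smw; [left|].
  by exists 0%N => //; right.
move=> n w /(@subset_seqDU _ S' n) S'nw [m Smw]; case: n S'nw => [|n] //= [|noS] //.
by exfalso; apply: noS; exists m.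
Qed.

End partitions.

Section selections_plus_closure.
Context {dO : measure_display} {Omega : measurableType dO} {R : realType}.
Context (P : probability Omega R) {d : nat}.
Implicit Types (X Y Z Xi : set (Omega -> 'rV[R]_d)).

Lemma fam_sumSr X Y Z : Y `<=` Z -> fam_sum X Y `<=` fam_sum X Z.
Proof. by move=> YZ _ [x Xx [y /YZ Zy ->]]; exists x => //; exists y. Qed.

Lemma L0_family_sub_cl0 Xi : L0_family Xi -> Xi `<=` cl0 P Xi.
Proof.
move=> mXi y Xiy; split; first exact: mXi.
exists (fun=> y); split => // e e0.
rewrite (_ : (fun n => _) = fun=> 0%E); first exact: cvg_cst.
apply/funext => n; rewrite (_ : [set w | _] = set0) ?measure0 //.
by apply/seteqP; split => w //=; rewrite subrr normr0 ltNge (ltW e0).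
Qed.

Lemma fam_sum_L0_sel_cl0 Xi (Gamma : Omega -> set 'rV[R]_d) :
  L0_family Xi -> inf_decomposable P Xi -> random_set_meas Gamma ->
  {ae P, forall w, open (Gamma w)} ->
  fam_sum (L0_sel P Gamma) (cl0 P Xi) `<=` fam_sum (L0_sel P Gamma) Xi.
Proof.
move=> mXi decXi mGamma openGamma _ [x [mx xGamma] [y [my [u [Xiu uy]]]] ->].
have mu n : rvec_meas (u n) by apply: mXi.
pose S n := [set w | Gamma w (x w + y w - u n w)].
have mS n : measurable (S n).
  exact: measurable_graph_section (rvec_measB (rvec_measD mx my) (mu n)) mGamma.
have hit : {ae P, forall w, exists n, S n w}.
  apply: filterS3 openGamma xGamma (cvg_in_prob_ae_inf_dist mu my uy).
  move=> w Gw_open Gxw near_w.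
  have /nbhs_ballP[e e0 ballG] : nbhs (x w) (Gamma w) by exact: open_nbhs_nbhs.
  have [n lt_n] := near_w e e0; exists n; apply: ballG.
  rewrite -ball_normE /ball_ /= (_ : x w - _ = u n w - y w) //.
  by rewrite opprB addrCA opprD addNKr.
have [A [partA hitA]] := meas_partition_first_hit mS.
have [y' Xiy' y'E] := decXi u A Xiu partA.
exists (x \+ y \- y'); last by exists y' => //; apply/funext => w; rewrite /= subrK.
split; first exact/rvec_measB/(mXi _ Xiy')/rvec_measD.
apply: filterS2 hit y'E => w hitw /= ->.
exact: hitA _ _ (meas_partition_xget w partA) hitw.
Qed.

End selections_plus_closure.

Theorem proposition2p3 (dO : measure_display) (Omega : measurableType dO)
  (R : realType) (P : probability Omega R) (d : nat)
  (Xi : set (Omega -> 'rV[R]_d)) (Gamma : Omega -> set 'rV[R]_d) :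
  measure_is_complete P ->
  L0_family Xi ->
  inf_decomposable P Xi ->
  random_set_meas Gamma ->
  {ae P, forall w, open (Gamma w) /\ Gamma w !=set0} ->
  forall eta : Omega -> 'rV[R]_d,
    ae_in P (fam_sum (L0_sel P Gamma) Xi) eta <->
    ae_in P (fam_sum (L0_sel P Gamma) (cl0 P Xi)) eta.
Proof.
move=> _ mXi decXi mGamma openGamma eta.
suff -> : fam_sum (L0_sel P Gamma) Xi = fam_sum (L0_sel P Gamma) (cl0 P Xi) by [].
apply/seteqP; split; first exact/fam_sumSr/L0_family_sub_cl0.
apply: fam_sum_L0_sel_cl0 => //.
by apply: filterS openGamma => w [].
Qed.
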